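(* Let the unperturbed dynamics (rates $W$) on the finite set $K$ be irreducible with unique stationary distribution $\rho$. For functions $V,M:K\to\mathbb{R}$, constants $a,b\in\mathbb{R}$ and small $h\in\mathbb{R}$, let $\rho^V=\rho^V_{h}$ be the unique stationary distribution of the dynamics with rates $W(x,y)e^{h(bV(y)-aV(x))}$, and let $\rho^M$ be the unique stationary distribution of the dynamics with rates $W(x,y)e^{h(aM(y)-bM(x))}$ (roles of $a$ and $b$ interchanged). Define \[ \chi^{ab}_{MV}=\frac{d}{dh}\Big|_{h=0}\sum_x\rho^V(x)\,LM(x),\qquad \chi^{ba}_{VM}=\frac{d}{dh}\Big|_{h=0}\sum_x\rho^M(x)\,LV(x). \] Then \[ \chi^{ab}_{MV}=\chi^{ba}_{VM}=b\,\langle M\,LV\rangle_\rho+a\,\langle V\,LM\rangle_\rho, \] where $\langle F\rangle_\rho=\sum_x\rho(x)F(x)$.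
   Context: $W(x,y)\ge0$ ($x\ne y\in K$) are transition rates on a finite set $K$ and $Lf(x)=\sum_yW(x,y)[f(y)-f(x)]$ is the backward generator of the unperturbed dynamics. *)

From Stdlib Require Export Reals Relation_Operators.
From mathcomp Require Export all_boot.
Set Implicit Arguments. Unset Strict Implicit. Unset Printing Implicit Defensive.
Open Scope R_scope.

Definition sumK (K : finType) (f : K -> R) : R := \big[Rplus/0]_(x : K) f x.

Definition gen (K : finType) (W : K -> K -> R) (f : K -> R) (x : K) : R :=
  \big[Rplus/0]_(y in predC1 x) (W x y * (f y - f x)).

Definition rates (K : finType) (W : K -> K -> R) : Prop :=
  forall x y : K, x <> y -> 0 <= W x y.

Definition irreducible (K : finType) (W : K -> K -> R) : Prop :=
  forall x y : K, clos_refl_trans K (fun u v => u <> v /\ 0 < W u v) x y.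

Definition stationary (K : finType) (W : K -> K -> R) (p : K -> R) : Prop :=
  (forall x, 0 <= p x) /\ sumK p = 1 /\
  forall y : K, \big[Rplus/0]_(x in predC1 y) (p x * W x y - p y * W y x) = 0.

Definition expect (K : finType) (rho F : K -> R) : R := sumK (fun x => rho x * F x).

Definition pert (K : finType) (W : K -> K -> R) (c d : R) (F : K -> R) (h : R)
  : K -> K -> R := fun x y => W x y * exp (h * (c * F y - d * F x)).

From Stdlib Require Import Reals Lra Relation_Operators Operators_Properties.
From mathcomp Require Import all_boot all_order Rstruct.
Set Implicit Arguments. Unset Strict Implicit. Unset Printing Implicit Defensive.
Open Scope R_scope.

(* Let s(x,y) = c F(y) - d F(x), and let p_h be a stationary law of the tilted rates
   W_h(x,y) = W(x,y) e^{h s(x,y)} with generator L_h.  Stationarity gives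
   <L_h G>_{p_h} = 0, hence <L G>_{p_h} = <(L - L_h) G>_{p_h}.  As
   W - W_h = h W (-s) phi(h s) with phi(t) = (e^t - 1)/t, the observable factors as
   h * g(h), so its derivative at h = 0 is g(0) as soon as g is continuous at 0.
   One more use of the stationarity of rho (tested against F G) identifies
   g(0) = c <G L F>_rho + d <F L G>_rho.

   The only analytic input is the continuity of h |-> p_h at 0, with p_0 = rho.  It
   follows from a quantitative stability estimate valid for any irreducible W: if
   W/t <= W' <= t W off the diagonal, every stationary law p of W' satisfies
   |p - rho| <= C (1 - 1/t^2).  This is a maximum principle for the density p/rho:
   its deficit below the maximum obeys a linear inequality along each positive-rate
   edge, and irreducibility propagates it from the maximiser to every state. *)

Lemma sum_ge0 (I : Type) (r : seq I) (P : pred I) (F : I -> R) :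
  (forall i, P i -> 0 <= F i) -> 0 <= \big[Rplus/0]_(i <- r | P i) F i.
Proof. by move=> F_ge0; apply: (big_ind (fun v => 0 <= v)) => // *; lra. Qed.

Lemma sum_le (I : Type) (r : seq I) (P : pred I) (F G : I -> R) :
  (forall i, P i -> F i <= G i) ->
  \big[Rplus/0]_(i <- r | P i) F i <= \big[Rplus/0]_(i <- r | P i) G i.
Proof. by move=> FG; apply: (big_ind2 (fun u v => u <= v)) => // *; lra. Qed.

Lemma term_le_sum (I : finType) (j : I) (P : pred I) (F : I -> R) :
  (forall i, P i -> 0 <= F i) -> P j -> F j <= \big[Rplus/0]_(i | P i) F i.
Proof.
move=> F_ge0 Pj; rewrite (bigD1 j) //=.
suff : 0 <= \big[Rplus/0]_(i | P i && (i != j)) F i by lra.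
by apply: sum_ge0 => i /andP[Pi _]; apply: F_ge0.
Qed.

Lemma sum_sub (I : Type) (r : seq I) (P : pred I) (F G : I -> R) :
  \big[Rplus/0]_(i <- r | P i) (F i - G i) =
  \big[Rplus/0]_(i <- r | P i) F i - \big[Rplus/0]_(i <- r | P i) G i.
Proof. by rewrite /Rminus big_split /= (big_morph Ropp Ropp_plus_distr Ropp_0). Qed.

Lemma exchange_offdiag (K : finType) (F : K -> K -> R) :
  \big[Rplus/0]_(x : K) \big[Rplus/0]_(y in predC1 x) F x y =
  \big[Rplus/0]_(y : K) \big[Rplus/0]_(x in predC1 y) F x y.
Proof.
rewrite (exchange_big_dep xpredT) //=; apply: eq_bigr => y _.
by apply: eq_bigl => x; rewrite !inE eq_sym.
Qed.

Lemma argmax_exists (K : finType) (f : K -> R) (x0 : K) : exists y, forall x, f x <= f y.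
Proof.
case: (@Order.TotalTheory.arg_maxP _ R K x0 xpredT f isT) => y _ max_y.
by exists y => x; apply/RleP; apply: max_y.
Qed.

Definition escape (K : finType) (W : K -> K -> R) (x : K) : R :=
  \big[Rplus/0]_(y in predC1 x) W x y.

Definition edge (K : finType) (W : K -> K -> R) (u v : K) : Prop := u <> v /\ 0 < W u v.

Lemma prob_le1 (K : finType) (p : K -> R) (x : K) :
  (forall z, 0 <= p z) -> sumK p = 1 -> p x <= 1.
Proof. by move=> p_ge0 <-; apply: (@term_le_sum K x xpredT). Qed.

Lemma stationary_balance (K : finType) (W : K -> K -> R) (p : K -> R) x :
  stationary W p ->
  \big[Rplus/0]_(u in predC1 x) (p u * W u x) = p x * escape W x.
Proof. by case=> _ [_ master]; move: (master x); rewrite sum_sub /escape big_distrr /=; lra. Qed.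

Lemma stationary_gen_mean (K : finType) (W : K -> K -> R) (p G : K -> R) :
  stationary W p -> sumK (fun x => p x * gen W G x) = 0.
Proof.
case=> _ [_ master].
have -> : sumK (fun x => p x * gen W G x) =
    \big[Rplus/0]_(x : K) \big[Rplus/0]_(y in predC1 x) (p x * W x y * G y)
  - \big[Rplus/0]_(x : K) \big[Rplus/0]_(y in predC1 x) (p x * W x y * G x).
  rewrite -sum_sub; apply: eq_bigr => x _.
  by rewrite /gen big_distrr -sum_sub /=; apply: eq_bigr => y _; ring.
rewrite exchange_offdiag -sum_sub big1 // => y _.
rewrite -sum_sub -[X in _ = X](Rmult_0_r (G y)) -[X in _ = _ * X](master y).
by rewrite big_distrr /=; apply: eq_bigr => x _; ring.
Qed.

Lemma stationary_vanish_backward (K : finType) (W : K -> K -> R) (p : K -> R) u x :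
  rates W -> stationary W p -> p x = 0 -> edge W u x -> p u = 0.
Proof.
move=> W_ge0 stat px0 [ux Wux]; have p_ge0 := proj1 stat.
have : p u * W u x <= p x * escape W x.
  rewrite -stationary_balance //; apply: (@term_le_sum K u (predC1 x) (fun v => p v * W v x)).
    by move=> v /eqP vx; apply: Rmult_le_pos; [apply: p_ge0 | apply: W_ge0].
  by apply/eqP.
by rewrite px0; have := p_ge0 u; nra.
Qed.

Lemma stationary_pos (K : finType) (W : K -> K -> R) (p : K -> R) x :
  rates W -> irreducible W -> stationary W p -> 0 < p x.
Proof.
move=> W_ge0 irr stat; have [p_ge0 [p_sum _]] := stat.
case: (Rle_lt_or_eq_dec _ _ (p_ge0 x)) => // /esym px0.
suff p0 : forall u, p u = 0 by move: p_sum; rewrite /sumK big1 //; lra.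
move=> u; move: px0; elim: (clos_rt_rt1n _ _ _ _ (irr u x)) => // a b c ab _ IH pc0.
exact: (stationary_vanish_backward W_ge0 stat (IH pc0) ab).
Qed.

Lemma chain_bound (T : Type) (E : T -> T -> Prop) (A B : T -> T -> R) u y :
  (forall a b, E a b -> 0 <= A a b /\ 0 <= B a b) ->
  clos_refl_trans_1n T E u y ->
  exists C, 0 <= C /\ forall (D : T -> R) e, (forall z, 0 <= D z) -> 0 <= e ->
    (forall a b, E a b -> D a <= A a b * D b + B a b * e) -> D u <= C * (D y + e).
Proof.
move=> AB_ge0; elim=> [x | a b c ab _ [C [C_ge0 bound_b]]].
  by exists 1; split=> [|D e D_ge0 e_ge0 _]; [lra | have := D_ge0 x; lra].
have [A_ge0 B_ge0] := AB_ge0 a b ab.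
exists (A a b * C + B a b); split; first nra.
move=> D e D_ge0 e_ge0 step; have Db := bound_b D e D_ge0 e_ge0 step.
have := step a b ab; have := D_ge0 c; nra.
Qed.

Lemma uniform_chain_bound (K : finType) (E : K -> K -> Prop) (A B : K -> K -> R) :
  (forall a b, E a b -> 0 <= A a b /\ 0 <= B a b) ->
  (forall u y, clos_refl_trans K E u y) ->
  exists C, 0 <= C /\ forall (D : K -> R) e, (forall z, 0 <= D z) -> 0 <= e ->
    (forall a b, E a b -> D a <= A a b * D b + B a b * e) ->
    forall u y, D u <= C * (D y + e).
Proof.
move=> AB_ge0 conn.
have /fin_all_exists [C0 C0_spec] : forall u, exists C : K -> R, forall y,
    0 <= C y /\ forall (D : K -> R) e, (forall z, 0 <= D z) -> 0 <= e ->
    (forall a b, E a b -> D a <= A a b * D b + B a b * e) -> D u <= C y * (D y + e).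
  move=> u; exact: fin_all_exists (fun y => chain_bound AB_ge0 (clos_rt_rt1n _ _ _ _ (conn u y))).
pose C := \big[Rplus/0]_(u : K) \big[Rplus/0]_(y : K) C0 u y.
have C0_le u y : C0 u y <= C.
  apply: Rle_trans (@term_le_sum K u xpredT _ _ isT).
    exact: (@term_le_sum K y xpredT (C0 u) (fun i _ => proj1 (C0_spec u i))).
  by move=> i _; apply: sum_ge0 => j _; apply: (proj1 (C0_spec i j)).
exists C; split.
  by apply: sum_ge0 => u _; apply: sum_ge0 => y _; apply: (proj1 (C0_spec u y)).
move=> D e D_ge0 e_ge0 step u y.
have := proj2 (C0_spec u y) D e D_ge0 e_ge0 step; have := C0_le u y.
have := D_ge0 y; nra.
Qed.

(* If p = rho r for probability vectors and r takes values in [m - d, m], then p is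
   d-close to rho (the mean of r under rho is 1). *)
Lemma ratio_close (K : finType) (rho p r : K -> R) (m d : R) :
  (forall u, 0 <= rho u) -> sumK rho = 1 -> sumK p = 1 ->
  (forall u, p u = rho u * r u) -> (forall u, m - d <= r u <= m) ->
  forall x, Rabs (p x - rho x) <= d.
Proof.
move=> rho_ge0 rho_sum p_sum p_eq r_bounds x.
have sum_const c : \big[Rplus/0]_(u : K) (rho u * c) = c.
  by rewrite -big_distrl /= -/(sumK rho) rho_sum Rmult_1_l.
have mean_r : \big[Rplus/0]_(u : K) (rho u * r u) = 1.
  by rewrite -p_sum; apply: eq_bigr => u _; rewrite p_eq.
have : m - d <= 1 <= m.
  rewrite -mean_r -{1}(sum_const (m - d)) -{2}(sum_const m).
  by split; apply: sum_le => u _; apply: Rmult_le_compat_l; rewrite ?rho_ge0 //; case: (r_bounds u).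
have := r_bounds x; have := rho_ge0 x; have := prob_le1 x rho_ge0 rho_sum.
rewrite p_eq => *; apply: Rabs_le; nra.
Qed.

Lemma inflow_lower_bound (K : finType) (W W' : K -> K -> R) (p : K -> R) t b :
  0 < t -> (forall x y, x <> y -> W x y / t <= W' x y <= t * W x y) -> stationary W' p ->
  p b * escape W b <= t * t * \big[Rplus/0]_(u in predC1 b) (p u * W u b).
Proof.
move=> t_gt0 W'_bounds stat'; have p_ge0 := proj1 stat'.
have out_bound : escape W b <= t * escape W' b.
  rewrite /escape big_distrr /=; apply: sum_le => u /eqP ub.
  have := proj1 (W'_bounds b u (nesym ub)).
  have -> : W b u / t = / t * W b u by rewrite /Rdiv Rmult_comm.
  move=> /(Rmult_le_compat_l t _ _ (Rlt_le _ _ t_gt0)).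
  by rewrite -Rmult_assoc Rinv_r ?Rmult_1_l //; lra.
have in_bound : p b * escape W' b <= t * \big[Rplus/0]_(u in predC1 b) (p u * W u b).
  rewrite -stationary_balance // big_distrr /=; apply: sum_le => u /eqP ub.
  by have := proj2 (W'_bounds u b ub); have := p_ge0 u; nra.
by have := p_ge0 b; nra.
Qed.

Lemma inv_square_le1 t : 1 <= t -> / (t * t) <= 1.
Proof. by move=> t_ge1; rewrite -Rinv_1; apply: Rinv_le_contravar; nra. Qed.

Section Stability.
Variables (K : finType) (W : K -> K -> R) (rho : K -> R).
Hypotheses (W_ge0 : rates W) (irr : irreducible W) (stat : stationary W rho).

Lemma escape_ge0 b : 0 <= escape W b.
Proof. by apply: sum_ge0 => u /eqP ub; apply: W_ge0 (nesym ub). Qed.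

Lemma deficit_inflow (p D : K -> R) (m t : R) b :
  1 <= t -> (forall u, p u = rho u * (m - D u)) -> p b <= 1 ->
  p b * escape W b <= t * t * \big[Rplus/0]_(u in predC1 b) (p u * W u b) ->
  \big[Rplus/0]_(u in predC1 b) (rho u * W u b * D u)
    <= rho b * escape W b * D b + escape W b * (1 - / (t * t)).
Proof.
move=> t_ge1 p_eq pb_le1 in_bound.
have inflow_eq : \big[Rplus/0]_(u in predC1 b) (p u * W u b) =
    m * (rho b * escape W b) - \big[Rplus/0]_(u in predC1 b) (rho u * W u b * D u).
  rewrite -(stationary_balance _ stat) big_distrr -sum_sub /=.
  by apply: eq_bigr => u _; rewrite p_eq; ring.
have tt_gt0 : 0 < t * t by nra.
have inv_le1 := inv_square_le1 t_ge1.
have scaled : p b * escape W b * / (t * t) <= m * (rho b * escape W b)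
    - \big[Rplus/0]_(u in predC1 b) (rho u * W u b * D u).
  rewrite -inflow_eq; apply: (Rmult_le_reg_l (t * t)) => //.
  by rewrite -Rmult_assoc (Rmult_comm (t * t)) Rmult_assoc Rinv_r ?Rmult_1_r //; lra.
have split_mass : m * rho b = p b + rho b * D b by rewrite p_eq; ring.
have slack : 0 <= (1 - p b) * (escape W b * (1 - / (t * t))).
  by apply: Rmult_le_pos; [lra | apply: Rmult_le_pos; [apply: escape_ge0 | lra]].
nra.
Qed.

Lemma deficit_edge (p D : K -> R) (m t : R) a b :
  1 <= t -> (forall u, p u = rho u * (m - D u)) -> p b <= 1 -> (forall u, 0 <= D u) ->
  p b * escape W b <= t * t * \big[Rplus/0]_(u in predC1 b) (p u * W u b) ->
  edge W a b ->
  D a <= rho b * escape W b / (rho a * W a b) * D b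
         + escape W b / (rho a * W a b) * (1 - / (t * t)).
Proof.
move=> t_ge1 p_eq pb_le1 D_ge0 in_bound [ab Wab].
have rho_a := stationary_pos a W_ge0 irr stat.
have den_gt0 : 0 < rho a * W a b by apply: Rmult_lt_0_compat.
have inflow_bound := deficit_inflow t_ge1 p_eq pb_le1 in_bound.
have edge_term : rho a * W a b * D a
    <= \big[Rplus/0]_(u in predC1 b) (rho u * W u b * D u).
  apply: (@term_le_sum K a (predC1 b) (fun u => rho u * W u b * D u)); last exact/eqP.
  move=> u /eqP ub; apply: Rmult_le_pos => //; apply: Rmult_le_pos; last exact: W_ge0.
  exact: (proj1 stat).
apply: (Rmult_le_reg_l _ _ _ den_gt0).
have -> : rho a * W a b * (rho b * escape W b / (rho a * W a b) * D b
      + escape W b / (rho a * W a b) * (1 - / (t * t)))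
    = rho b * escape W b * D b + escape W b * (1 - / (t * t)).
  by field; split; lra.
lra.
Qed.

(* Take m = max p/rho and D = m - p/rho >= 0: D vanishes at a
   maximiser and obeys the edge inequality deficit_edge, so uniform_chain_bound gives
   D <= C (1 - 1/t^2) everywhere, and ratio_close concludes. *)
Theorem stationary_stability : exists C, 0 <= C /\
  forall t (W' : K -> K -> R) p, 1 <= t ->
  (forall x y, x <> y -> W x y / t <= W' x y <= t * W x y) -> stationary W' p ->
  forall x, Rabs (p x - rho x) <= C * (1 - / (t * t)).
Proof.
have rho_gt0 u : 0 < rho u := stationary_pos u W_ge0 irr stat.
pose A a b := rho b * escape W b / (rho a * W a b).
pose B a b := escape W b / (rho a * W a b).
have AB_ge0 a b : edge W a b -> 0 <= A a b /\ 0 <= B a b.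
  case=> _ Wab; have inv_gt0 : 0 < / (rho a * W a b).
    by apply/Rinv_0_lt_compat/Rmult_lt_0_compat.
  rewrite /A /B /Rdiv; split; repeat apply: Rmult_le_pos;
    solve [apply: escape_ge0 | apply: Rlt_le; apply: rho_gt0 | apply: Rlt_le; exact: inv_gt0].
have [C [C_ge0 propagate]] := uniform_chain_bound AB_ge0 irr.
exists C; split => // t W' p t_ge1 W'_bounds stat' x.
have [p_ge0 [p_sum _]] := stat'; have [rho_ge0 [rho_sum _]] := stat.
pose e := 1 - / (t * t).
have e_ge0 : 0 <= e by have := inv_square_le1 t_ge1; rewrite /e; lra.
pose r u := p u / rho u.
have p_eq u : p u = rho u * r u by rewrite /r; field; have := rho_gt0 u; lra.
have [y0 r_max] := argmax_exists r x.
pose D u := r y0 - r u.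
have D_ge0 u : 0 <= D u by have := r_max u; rewrite /D; lra.
have p_eq' u : p u = rho u * (r y0 - D u) by rewrite /D p_eq; ring.
have step a b : edge W a b -> D a <= A a b * D b + B a b * e.
  apply: (deficit_edge t_ge1 p_eq' (prob_le1 b p_ge0 p_sum) D_ge0).
  by apply: (@inflow_lower_bound _ W W' p t b _ W'_bounds stat'); lra.
have D_small u : D u <= C * e.
  by have := propagate D e D_ge0 e_ge0 step u y0; rewrite /D Rminus_diag Rplus_0_l.
rewrite -/e; apply: (ratio_close rho_ge0 rho_sum p_sum p_eq (m := r y0)) => u.
by have := D_small u; have := r_max u; rewrite /D; split; lra.
Qed.

End Stability.

Lemma finite_bound (K : finType) (f : K -> K -> R) : exists B, forall x y, Rabs (f x y) <= B.
Proof.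
exists (\big[Rplus/0]_(x : K) \big[Rplus/0]_(y : K) Rabs (f x y)) => x y.
apply: Rle_trans (@term_le_sum K x xpredT _ _ isT).
  exact: (@term_le_sum K y xpredT (fun y => Rabs (f x y)) (fun i _ => Rabs_pos _)).
by move=> i _; apply: sum_ge0 => j _; apply: Rabs_pos.
Qed.

Lemma exp_le (x y : R) : x <= y -> exp x <= exp y.
Proof. by case/Rle_lt_or_eq_dec => [/exp_increasing/Rlt_le | ->] //; apply: Rle_refl. Qed.

Lemma tilt_bounds (K : finType) (W : K -> K -> R) c d (F : K -> R) B h :
  rates W -> (forall x y, Rabs (c * F y - d * F x) <= B) ->
  forall x y, x <> y ->
  W x y / exp (Rabs h * B) <= pert W c d F h x y <= exp (Rabs h * B) * W x y.
Proof.
move=> W_ge0 B_bound x y xy; have Wxy := W_ge0 x y xy.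
have tilt_small : Rabs (h * (c * F y - d * F x)) <= Rabs h * B.
  by rewrite Rabs_mult; apply: Rmult_le_compat_l; [apply: Rabs_pos | apply: B_bound].
have := Rle_abs (h * (c * F y - d * F x)).
have := Rle_abs (- (h * (c * F y - d * F x))); rewrite Rabs_Ropp => lo hi.
rewrite /pert /Rdiv -exp_Ropp; split; last rewrite [X in _ <= X]Rmult_comm;
  by apply: Rmult_le_compat_l => //; apply: exp_le; lra.
Qed.

Lemma continuity_pt_cst (a x0 : R) : continuity_pt (fun _ => a) x0.
Proof. by apply: continuity_pt_const. Qed.

Lemma continuity_pt_sum (I : Type) (r : seq I) (P : pred I) (F : I -> R -> R) x0 :
  (forall i, P i -> continuity_pt (F i) x0) ->
  continuity_pt (fun h => \big[Rplus/0]_(i <- r | P i) F i h) x0.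
Proof.
move=> F_cont; elim: r => [|i r IH].
  by apply: continuity_pt_const => h h'; rewrite !big_nil.
case Pi: (P i).
- apply: (continuity_pt_locally_ext (fun h => F i h + \big[Rplus/0]_(j <- r | P j) F j h) _ 1).
  + exact: Rlt_0_1.
  + by move=> h _; rewrite big_cons Pi.
  + exact: continuity_pt_plus (F_cont i Pi) IH.
- apply: (continuity_pt_locally_ext (fun h => \big[Rplus/0]_(j <- r | P j) F j h) _ 1) => //.
  + exact: Rlt_0_1.
  + by move=> h _; rewrite big_cons Pi.
Qed.

Lemma continuity_pt_of_bound (f e : R -> R) (l C : R) :
  0 <= C -> (forall h, Rabs (f h - l) <= C * e h) -> continuity_pt e 0 -> e 0 = 0 ->
  f 0 = l /\ continuity_pt f 0.
Proof.
move=> C_ge0 bound e_cont e0.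
have f0 : f 0 = l.
  have := bound 0; rewrite e0 Rmult_0_r => f0_close.
  by have := Rle_abs (f 0 - l); have := Rle_abs (- (f 0 - l)); rewrite Rabs_Ropp; lra.
split=> // eps eps_gt0.
have eps'_gt0 : 0 < eps / (C + 1) by apply: Rdiv_lt_0_compat; lra.
have [del [del_gt0 e_close]] := e_cont _ eps'_gt0.
exists del; split=> // h h_near; have := e_close h h_near.
rewrite /= /R_dist f0 e0 Rminus_0_r => e_small.
have scale : eps / (C + 1) * (C + 1) = eps by field; lra.
have := bound h; have := Rle_abs (e h); nra.
Qed.

Lemma derivative_of_factor (f g : R -> R) :
  (forall h, f h = h * g h) -> continuity_pt g 0 -> derivable_pt_lim f 0 (g 0).
Proof.
move=> f_eq g_cont eps eps_gt0; have [del [del_gt0 g_close]] := g_cont eps eps_gt0.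
exists (mkposreal del del_gt0) => h h_neq0 h_small.
have -> : (f (0 + h) - f 0) / h = g h by rewrite !f_eq Rplus_0_l; field.
apply: g_close; split; first by split=> //; apply: nesym.
by rewrite /= /R_dist Rminus_0_r.
Qed.

Definition phi (t : R) : R := if t == 0 then 1 else (exp t - 1) / t.

Lemma phi0 : phi 0 = 1.
Proof. by rewrite /phi eqxx. Qed.

(* phi is continuous at 0 (this is exp'(0) = 1), hence so is h |-> phi(h s). *)
Lemma phi_continuous : continuity_pt phi 0.
Proof.
move=> eps eps_gt0; have [del exp_close] := derivable_pt_lim_exp_0 eps eps_gt0.
exists del; split; first exact: cond_pos.
move=> h [[_ h_neq0] h_small]; move: h_small; rewrite /= /R_dist Rminus_0_r phi0 /phi.
case: eqP => [h0 | _ h_small]; first by case: h_neq0.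
by have := exp_close h (nesym h_neq0) h_small; rewrite Rplus_0_l exp_0.
Qed.

Lemma phi_scaled_continuous (s : R) : continuity_pt (fun h => phi (h * s)) 0.
Proof.
apply: (continuity_pt_comp (fun h => h * s) phi).
  exact: continuity_pt_mult (derivable_continuous_pt _ _ (derivable_pt_id 0)) (continuity_pt_cst s 0).
by rewrite Rmult_0_l; apply: phi_continuous.
Qed.

Lemma exp_tilt_difference (w s h : R) : w - w * exp (h * s) = h * (w * (- s * phi (h * s))).
Proof.
rewrite /phi; case: eqP => [hs0 | hs_neq0].
  by rewrite hs0 exp_0; transitivity (- w * (h * s)); [rewrite hs0 | ]; ring.
have h_neq0 : h <> 0 by move=> h0; apply: hs_neq0; rewrite h0 Rmult_0_l.
have s_neq0 : s <> 0 by move=> s0; apply: hs_neq0; rewrite s0 Rmult_0_r.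
by field.
Qed.

(* Stationary laws of the tilted rates converge to rho as h -> 0 (stationary_stability
   with t = e^{|h| B}). *)
Lemma tilted_stationary_continuous (K : finType) (W : K -> K -> R) (rho : K -> R)
    c d (F : K -> R) (p : R -> K -> R) :
  rates W -> irreducible W -> stationary W rho ->
  (forall h, stationary (pert W c d F h) (p h)) ->
  forall x, p 0 x = rho x /\ continuity_pt (fun h => p h x) 0.
Proof.
move=> W_ge0 irr stat p_stat x.
have [C [C_ge0 stable]] := stationary_stability W_ge0 irr stat.
have [B B_bound] := finite_bound (fun x y => c * F y - d * F x).
have B_ge0 : 0 <= B := Rle_trans _ _ _ (Rabs_pos _) (B_bound x x).
pose t h := exp (Rabs h * B).
have t_ge1 h : 1 <= t h.
  by have := exp_ineq1_le (Rabs h * B); have := Rabs_pos h; rewrite /t; nra.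
have t_cont : continuity_pt t 0.
  apply: (continuity_pt_comp (fun h => Rabs h * B) exp).
    exact: continuity_pt_mult (Rcontinuity_abs 0) (continuity_pt_cst B 0).
  exact: derivable_continuous_pt (derivable_pt_exp _).
apply: (continuity_pt_of_bound (e := fun h => 1 - / (t h * t h)) C_ge0).
- move=> h; apply: stable (t_ge1 h) _ (p_stat h) x.
  exact: tilt_bounds W_ge0 B_bound.
- apply: continuity_pt_minus (continuity_pt_cst 1 0) _.
  apply: continuity_pt_inv; first exact: (continuity_pt_mult _ _ _ t_cont t_cont).
  by have := t_ge1 0; nra.
- by rewrite /t Rabs_R0 Rmult_0_l exp_0 Rmult_1_l Rinv_1; ring.
Qed.

(* The rates (W - W_h)/h = W (-s) phi(h s). *)
Definition tilt_slope (K : finType) (W : K -> K -> R) c d (F : K -> R) (h : R) :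
  K -> K -> R :=
  fun x y => W x y * (- (c * F y - d * F x) * phi (h * (c * F y - d * F x))).

Lemma response_factorization (K : finType) (W : K -> K -> R) c d (F G : K -> R) h
    (p : K -> R) :
  stationary (pert W c d F h) p ->
  sumK (fun x => p x * gen W G x) = h * sumK (fun x => p x * gen (tilt_slope W c d F h) G x).
Proof.
move=> stat_h.
rewrite -[LHS]Rminus_0_r -(stationary_gen_mean G stat_h) /sumK -sum_sub big_distrr /=.
apply: eq_bigr => x _.
have rate_gap : gen W G x - gen (pert W c d F h) G x = h * gen (tilt_slope W c d F h) G x.
  rewrite /gen -sum_sub big_distrr /=; apply: eq_bigr => y _.
  rewrite /pert /tilt_slope; set s := c * F y - d * F x.
  transitivity ((W x y - W x y * exp (h * s)) * (G y - G x)); first ring.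
  by rewrite exp_tilt_difference; ring.
by rewrite -Rmult_minus_distr_l rate_gap; ring.
Qed.

(* At h = 0 the slope rates are W (-s); stationarity of rho tested against F G turns
   <W (-s) (G y - G x)>_rho into c <G L F>_rho + d <F L G>_rho. *)
Lemma response_at_zero (K : finType) (W : K -> K -> R) (rho : K -> R) c d (F G : K -> R) :
  stationary W rho ->
  sumK (fun x => rho x * gen (tilt_slope W c d F 0) G x)
  = c * expect rho (fun x => G x * gen W F x) + d * expect rho (fun x => F x * gen W G x).
Proof.
move=> stat; have product_mean := stationary_gen_mean (fun z => F z * G z) stat.
rewrite -[RHS]Rminus_0_r -[X in _ - X](Rmult_0_r c) -[X in _ - _ * X]product_mean.
rewrite /expect /sumK !big_distrr -big_split -sum_sub /=; apply: eq_bigr => x _.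
rewrite /gen /tilt_slope !big_distrr -big_split -sum_sub /=; apply: eq_bigr => y _.
by rewrite Rmult_0_l phi0; ring.
Qed.

Lemma linear_response (K : finType) (W : K -> K -> R) (rho : K -> R) c d (F G : K -> R)
    (p : R -> K -> R) :
  rates W -> irreducible W -> stationary W rho ->
  (forall h, stationary (pert W c d F h) (p h)) ->
  derivable_pt_lim (fun h => sumK (fun x => p h x * gen W G x)) 0
    (c * expect rho (fun x => G x * gen W F x) + d * expect rho (fun x => F x * gen W G x)).
Proof.
move=> W_ge0 irr stat p_stat.
have p_cont := tilted_stationary_continuous W_ge0 irr stat p_stat.
pose g h := sumK (fun x => p h x * gen (tilt_slope W c d F h) G x).
have -> : c * expect rho (fun x => G x * gen W F x) + d * expect rho (fun x => F x * gen W G x)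
    = g 0.
  by rewrite -(response_at_zero c d F G stat); apply: eq_bigr => x _; rewrite (proj1 (p_cont x)).
apply: derivative_of_factor => [h | ]; first exact: response_factorization (p_stat h).
apply: continuity_pt_sum => x _; apply: continuity_pt_mult; first exact: (proj2 (p_cont x)).
apply: continuity_pt_sum => y _; rewrite /tilt_slope.
apply: continuity_pt_mult (continuity_pt_cst _ 0).
apply: continuity_pt_mult (continuity_pt_cst _ 0) _.
exact: continuity_pt_mult (continuity_pt_cst _ 0) (phi_scaled_continuous _).
Qed.

Theorem proposition2 (K : finType) (W : K -> K -> R) (rho : K -> R)
  (V M : K -> R) (a b : R) (rhoV rhoM : R -> K -> R) :
  rates W -> irreducible W -> stationary W rho ->
  (forall h, stationary (pert W b a V h) (rhoV h)) ->
  (forall h, stationary (pert W a b M h) (rhoM h)) ->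
  let chi := b * expect rho (fun x => M x * gen W V x)
             + a * expect rho (fun x => V x * gen W M x) in
  derivable_pt_lim (fun h => sumK (fun x => rhoV h x * gen W M x)) 0 chi /\
  derivable_pt_lim (fun h => sumK (fun x => rhoM h x * gen W V x)) 0 chi.
Proof.
move=> W_ge0 irr stat statV statM chi; split.
- exact: linear_response W_ge0 irr stat statV.
- by rewrite /chi Rplus_comm; apply: linear_response W_ge0 irr stat statM.
Qed.
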